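(* Let $K\ge1$, $\beta\in(0,1)$, $V^{\mathrm c}>0$, and for each $k$ let $\alpha_k>0$ with $\sum_k\alpha_k=1$, $L_k>0$, $V_k^{\mathrm d}>0$, $R_k>0$. For $t_k>0$, $V_k^{\mathrm c}>0$ define \[ \widehat D_{k,1}=\frac{L_k}{t_kR_k}\cdot\frac{(t_kR_k+V_k^{\mathrm c})(t_kR_k+\beta V_k^{\mathrm d})}{V_k^{\mathrm d}V_k^{\mathrm c}(1+\beta)+t_kR_k(V_k^{\mathrm d}+V_k^{\mathrm c})},\qquad \widehat D_{k,2}=\frac{L_k}{t_kR_k}\cdot\frac{t_kR_k+\beta V_k^{\mathrm d}}{V_k^{\mathrm d}+t_kR_k}, \] and $\widehat D_k=\widehat D_{k,1}$ if $t_kR_k\ge\sqrt{\beta V_k^{\mathrm d}V_k^{\mathrm c}}$, $\widehat D_k=\widehat D_{k,2}$ if $t_kR_k<\sqrt{\beta V_k^{\mathrm d}V_k^{\mathrm c}}$. Consider the problem (Problem 4) \[ \min_{\{t_k,V_k^{\mathrm c}\}}\sum_{k=1}^K\alpha_k\widehat D_k\quad\text{s.t.}\quad \sum_{k=1}^K t_k\le1,\ t_k\ge0,\quad \sum_{k=1}^K V_k^{\mathrm c}\le V^{\mathrm c},\ V_k^{\mathrm c}\ge0. \] Then Problem 4 is a piecewise convex optimization problem: each $\widehat D_k$ is a continuous, piecewise-defined function of $(t_k,V_k^{\mathrm c})$ whose pieces $\widehat D_{k,1}$, $\widehat D_{k,2}$ are convex, and the objective $\sum_k\alpha_k\widehat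 D_k$ is convex in $(t_1,\dots,t_K,V_1^{\mathrm c},\dots,V_K^{\mathrm c})$ on the domain $t_k>0$, $V_k^{\mathrm c}>0$.
   Context: $\widehat D_k$ is the minimal end-to-end delay of device $k$ in the partial compression offloading model (local compression speed $V_k^{\mathrm d}$, edge compression speed $V_k^{\mathrm c}$, TDMA time fraction $t_k$, average channel rate $R_k$, $L_k$ raw bits, compression ratio $\beta$) after optimizing the fraction of data compressed locally. The paper asserts ''Problem 4 is a piecewise convex optimization problem''; the claim spells this out as convexity of the pieces and of the overall objective. *)

From Stdlib Require Import Reals Lra.
From Coquelicot Require Import Coquelicot.
Open Scope R_scope.

Definition Dhat1 (L Rk Vd beta t Vc : R) : R :=
  L / (t * Rk) *
  (((t * Rk + Vc) * (t * Rk + beta * Vd)) /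
   (Vd * Vc * (1 + beta) + t * Rk * (Vd + Vc))).

Definition Dhat2 (L Rk Vd beta t Vc : R) : R :=
  L / (t * Rk) * ((t * Rk + beta * Vd) / (Vd + t * Rk)).

Definition Dhat (L Rk Vd beta t Vc : R) : R :=
  if Rle_dec (sqrt (beta * Vd * Vc)) (t * Rk)
  then Dhat1 L Rk Vd beta t Vc
  else Dhat2 L Rk Vd beta t Vc.

(* Objective of Problem 4: sum_{k=0}^{K-1} alpha_k * Dhat_k (devices indexed 0..K-1). *)
Definition objective (K : nat) (alpha L Rk Vd : nat -> R) (beta : R)
  (t Vc : nat -> R) : R :=
  sum_f_R0 (fun k => alpha k * Dhat (L k) (Rk k) (Vd k) beta (t k) (Vc k)) (K - 1).

Definition convex_pos2 (f : R -> R -> R) : Prop :=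
  forall x1 y1 x2 y2 l : R,
    0 < x1 -> 0 < y1 -> 0 < x2 -> 0 < y2 -> 0 <= l <= 1 ->
    f (l * x1 + (1 - l) * x2) (l * y1 + (1 - l) * y2)
      <= l * f x1 y1 + (1 - l) * f x2 y2.

(* Joint convexity of a function of (t_0..t_{K-1}, Vc_0..Vc_{K-1}) on the
   domain t_k > 0, Vc_k > 0 (k < K). Only the first K coordinates matter. *)
Definition convex_pos_vec (K : nat) (F : (nat -> R) -> (nat -> R) -> R) : Prop :=
  forall (t1 v1 t2 v2 : nat -> R) (l : R),
    (forall k, (k < K)%nat -> 0 < t1 k /\ 0 < v1 k /\ 0 < t2 k /\ 0 < v2 k) ->
    0 <= l <= 1 ->
    F (fun k => l * t1 k + (1 - l) * t2 k) (fun k => l * v1 k + (1 - l) * v2 k)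
      <= l * F t1 v1 + (1 - l) * F t2 v2.

(* With x = t R_k > 0 and c = V^c > 0, the difference Dhat1 - Dhat2 has the
   sign of x^2 - beta V^d c, so the case split in Dhat always selects the
   larger piece: Dhat = max (Dhat1, Dhat2) on the positive quadrant.  Hence
   Dhat is continuous there and convex as soon as both pieces are.
   Dhat2 = L (beta / x + (1 - beta) / (x + V^d)) is convex in x.  For Dhat1,
   partial fractions in x give (up to the factor L / ((1 + beta) (V^d)^2))
     (1 - beta) V^d - x + beta (V^d)^2 / x + (x + beta V^d)^2 / (x + y c),
   where y c = (1 + beta) V^d c / (V^d + c) is concave and positive; the last
   term is convex because u^2 / w is jointly convex and decreasing in w.  The
   objective is a nonnegative combination of the Dhat_k. *)
From Stdlib Require Import Reals Lra Lia.
From Coquelicot Require Import Coquelicot.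
Open Scope R_scope.

Lemma sqr_div_convex u1 u2 w1 w2 l : 0 < w1 -> 0 < w2 -> 0 <= l <= 1 ->
  (l * u1 + (1 - l) * u2) ^ 2 / (l * w1 + (1 - l) * w2)
    <= l * (u1 ^ 2 / w1) + (1 - l) * (u2 ^ 2 / w2).
Proof.
  intros Hw1 Hw2 Hl.
  assert (Hw : 0 < l * w1 + (1 - l) * w2) by nra.
  assert (Hgap : l * (u1 ^ 2 / w1) + (1 - l) * (u2 ^ 2 / w2)
                 - (l * u1 + (1 - l) * u2) ^ 2 / (l * w1 + (1 - l) * w2)
               = l * (1 - l) * (u1 * w2 - u2 * w1) ^ 2
                 / (w1 * w2 * (l * w1 + (1 - l) * w2))) by (field; lra).
  assert (0 <= l * (1 - l) * (u1 * w2 - u2 * w1) ^ 2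
               / (w1 * w2 * (l * w1 + (1 - l) * w2))).
  { apply Rdiv_le_0_compat.
    - apply Rmult_le_pos; [nra | apply pow2_ge_0].
    - apply Rmult_lt_0_compat; [nra | lra]. }
  lra.
Qed.

Lemma Rinv_convex w1 w2 l : 0 < w1 -> 0 < w2 -> 0 <= l <= 1 ->
  / (l * w1 + (1 - l) * w2) <= l * / w1 + (1 - l) * / w2.
Proof.
  intros Hw1 Hw2 Hl.
  pose proof (sqr_div_convex 1 1 w1 w2 l Hw1 Hw2 Hl) as H.
  replace (l * 1 + (1 - l) * 1) with 1 in H by ring.
  unfold Rdiv in H; rewrite !pow1, !Rmult_1_l in H; exact H.
Qed.

Lemma div_shift_concave a V c1 c2 l : 0 <= a -> 0 < V -> 0 < c1 -> 0 < c2 ->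
  0 <= l <= 1 ->
  l * (a * c1 / (V + c1)) + (1 - l) * (a * c2 / (V + c2))
    <= a * (l * c1 + (1 - l) * c2) / (V + (l * c1 + (1 - l) * c2)).
Proof.
  intros Ha HV Hc1 Hc2 Hl.
  assert (Hsat : forall c, 0 < c -> a * c / (V + c) = a - a * V * / (V + c))
    by (intros c Hc; field; lra).
  rewrite !Hsat by nra.
  generalize (Rinv_convex (V + c1) (V + c2) l ltac:(lra) ltac:(lra) Hl).
  replace (l * (V + c1) + (1 - l) * (V + c2)) with (V + (l * c1 + (1 - l) * c2))
    by ring.
  intros Hinv.
  apply Rmult_le_compat_l with (r := a * V) in Hinv; nra.
Qed.

Section ConvexPos2.

Implicit Types f g : R -> R -> R.

Lemma convex_pos2_ext f g :
  (forall x y, 0 < x -> 0 < y -> f x y = g x y) ->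
  convex_pos2 f -> convex_pos2 g.
Proof.
  intros Hfg Hf x1 y1 x2 y2 l Hx1 Hy1 Hx2 Hy2 Hl.
  rewrite <- !Hfg by nra.
  exact (Hf x1 y1 x2 y2 l Hx1 Hy1 Hx2 Hy2 Hl).
Qed.

Lemma convex_pos2_plus f g :
  convex_pos2 f -> convex_pos2 g -> convex_pos2 (fun x y => f x y + g x y).
Proof.
  intros Hf Hg x1 y1 x2 y2 l Hx1 Hy1 Hx2 Hy2 Hl.
  generalize (Hf x1 y1 x2 y2 l Hx1 Hy1 Hx2 Hy2 Hl)
             (Hg x1 y1 x2 y2 l Hx1 Hy1 Hx2 Hy2 Hl).
  lra.
Qed.

Lemma convex_pos2_scal a f :
  0 <= a -> convex_pos2 f -> convex_pos2 (fun x y => a * f x y).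
Proof.
  intros Ha Hf x1 y1 x2 y2 l Hx1 Hy1 Hx2 Hy2 Hl.
  generalize (Hf x1 y1 x2 y2 l Hx1 Hy1 Hx2 Hy2 Hl); intros H.
  apply Rmult_le_compat_l with (r := a) in H; [lra | exact Ha].
Qed.

Lemma convex_pos2_Rmax f g :
  convex_pos2 f -> convex_pos2 g -> convex_pos2 (fun x y => Rmax (f x y) (g x y)).
Proof.
  intros Hf Hg x1 y1 x2 y2 l Hx1 Hy1 Hx2 Hy2 Hl.
  generalize (Hf x1 y1 x2 y2 l Hx1 Hy1 Hx2 Hy2 Hl)
             (Hg x1 y1 x2 y2 l Hx1 Hy1 Hx2 Hy2 Hl).
  generalize (Rmax_l (f x1 y1) (g x1 y1)) (Rmax_r (f x1 y1) (g x1 y1))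
             (Rmax_l (f x2 y2) (g x2 y2)) (Rmax_r (f x2 y2) (g x2 y2)).
  intros; apply Rmax_lub; nra.
Qed.

Lemma convex_pos2_scale_l r f :
  0 < r -> convex_pos2 f -> convex_pos2 (fun x y => f (x * r) y).
Proof.
  intros Hr Hf x1 y1 x2 y2 l Hx1 Hy1 Hx2 Hy2 Hl.
  replace ((l * x1 + (1 - l) * x2) * r) with (l * (x1 * r) + (1 - l) * (x2 * r))
    by ring.
  apply Hf; nra.
Qed.

Lemma convex_pos2_shift_l s f :
  0 <= s -> convex_pos2 f -> convex_pos2 (fun x y => f (x + s) y).
Proof.
  intros Hs Hf x1 y1 x2 y2 l Hx1 Hy1 Hx2 Hy2 Hl.
  replace (l * x1 + (1 - l) * x2 + s) with (l * (x1 + s) + (1 - l) * (x2 + s))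
    by ring.
  apply Hf; lra.
Qed.

Lemma convex_pos2_affine_l a m : convex_pos2 (fun x _ => a + m * x).
Proof. intros x1 y1 x2 y2 l _ _ _ _ _; right; ring. Qed.

Lemma convex_pos2_Rinv_l : convex_pos2 (fun x _ => / x).
Proof.
  intros x1 y1 x2 y2 l Hx1 _ Hx2 _ Hl.
  exact (Rinv_convex x1 x2 l Hx1 Hx2 Hl).
Qed.

Lemma convex_pos2_sqr_div_concave p q :
  (forall c, 0 < c -> 0 <= q c) ->
  (forall c1 c2 l, 0 < c1 -> 0 < c2 -> 0 <= l <= 1 ->
     l * q c1 + (1 - l) * q c2 <= q (l * c1 + (1 - l) * c2)) ->
  convex_pos2 (fun x c => (x + p) ^ 2 / (x + q c)).
Proof.
  intros Hq_ge0 Hq_concave x1 c1 x2 c2 l Hx1 Hc1 Hx2 Hc2 Hl.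
  generalize (Hq_ge0 c1 Hc1) (Hq_ge0 c2 Hc2) (Hq_concave c1 c2 l Hc1 Hc2 Hl).
  intros Hq1 Hq2 Hq.
  assert (Hxl : 0 < l * x1 + (1 - l) * x2) by nra.
  assert (Hmix : (l * x1 + (1 - l) * x2 + p) ^ 2
                   / (l * x1 + (1 - l) * x2 + q (l * c1 + (1 - l) * c2))
                 <= (l * x1 + (1 - l) * x2 + p) ^ 2
                   / (l * x1 + (1 - l) * x2 + (l * q c1 + (1 - l) * q c2))).
  { apply Rmult_le_compat_l; [apply pow2_ge_0 |].
    apply Rinv_le_contravar; [nra | lra]. }
  generalize (sqr_div_convex (x1 + p) (x2 + p) (x1 + q c1) (x2 + q c2) l
                ltac:(lra) ltac:(lra) Hl).
  replace (l * (x1 + p) + (1 - l) * (x2 + p)) with (l * x1 + (1 - l) * x2 + p)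
    by ring.
  replace (l * (x1 + q c1) + (1 - l) * (x2 + q c2))
    with (l * x1 + (1 - l) * x2 + (l * q c1 + (1 - l) * q c2)) by ring.
  lra.
Qed.

End ConvexPos2.

Section Delay.

Variables (L Rk V b : R).
Hypotheses (HL : 0 < L) (HRk : 0 < Rk) (HV : 0 < V) (Hb : 0 < b < 1).

(* Each summand has the shape of one of the convexity lemmas above. *)
Definition Dhat1_core (x c : R) : R :=
  (1 - b) * V + -1 * x + b * V ^ 2 * / x
  + (x + b * V) ^ 2 / (x + V * (1 + b) * c / (V + c)).

Lemma Dhat1_partial_fractions t c : 0 < t -> 0 < c ->
  Dhat1 L Rk V b t c = L / ((1 + b) * V ^ 2) * Dhat1_core (t * Rk) c.
Proof.
  intros Ht Hc. unfold Dhat1, Dhat1_core.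
  assert (0 < t * Rk) by nra.
  assert (0 < V * c * (1 + b)) by (apply Rmult_lt_0_compat; nra).
  assert (0 < t * Rk * (V + c)) by nra.
  field; repeat split; nra.
Qed.

Lemma Dhat1_core_convex : convex_pos2 Dhat1_core.
Proof.
  unfold Dhat1_core.
  apply convex_pos2_plus; [apply convex_pos2_plus |].
  - apply convex_pos2_affine_l.
  - apply convex_pos2_scal; [nra | apply convex_pos2_Rinv_l].
  - apply convex_pos2_sqr_div_concave.
    + intros c Hc. apply Rlt_le, Rdiv_lt_0_compat; [| lra].
      apply Rmult_lt_0_compat; [apply Rmult_lt_0_compat |]; lra.
    + intros c1 c2 l Hc1 Hc2 Hl.
      exact (div_shift_concave (V * (1 + b)) V c1 c2 l ltac:(nra) HV Hc1 Hc2 Hl).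
Qed.

Lemma Dhat1_convex : convex_pos2 (Dhat1 L Rk V b).
Proof.
  apply (convex_pos2_ext (fun t c => L / ((1 + b) * V ^ 2) * Dhat1_core (t * Rk) c)).
  - intros t c Ht Hc; symmetry; exact (Dhat1_partial_fractions t c Ht Hc).
  - apply convex_pos2_scal.
    + apply Rlt_le, Rdiv_lt_0_compat; [lra | apply Rmult_lt_0_compat; nra].
    + exact (convex_pos2_scale_l Rk Dhat1_core HRk Dhat1_core_convex).
Qed.

Lemma Dhat2_convex : convex_pos2 (Dhat2 L Rk V b).
Proof.
  apply (convex_pos2_ext (fun t c => L * (b * / (t * Rk) + (1 - b) * / (t * Rk + V)))).
  - intros t c Ht Hc. unfold Dhat2.
    assert (0 < t * Rk) by nra.
    field; lra.
  - apply (convex_pos2_scale_l Rk (fun x _ => L * (b * / x + (1 - b) * / (x + V))) HRk).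
    apply convex_pos2_scal; [lra |].
    apply convex_pos2_plus; apply convex_pos2_scal; try lra.
    + apply convex_pos2_Rinv_l.
    + apply (convex_pos2_shift_l V (fun x _ => / x)); [lra | apply convex_pos2_Rinv_l].
Qed.

Lemma Dhat1_sub_Dhat2 t c : 0 < t -> 0 < c ->
  Dhat1 L Rk V b t c - Dhat2 L Rk V b t c =
  L / (t * Rk) * (t * Rk + b * V) * ((t * Rk) ^ 2 - b * V * c)
    / ((V * c * (1 + b) + t * Rk * (V + c)) * (V + t * Rk)).
Proof.
  intros Ht Hc. unfold Dhat1, Dhat2.
  assert (0 < t * Rk) by nra.
  assert (0 < V * c * (1 + b)) by (apply Rmult_lt_0_compat; nra).
  assert (0 < t * Rk * (V + c)) by nra.
  field; repeat split; nra.
Qed.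

Lemma Dhat_eq_Rmax t c : 0 < t -> 0 < c ->
  Dhat L Rk V b t c = Rmax (Dhat1 L Rk V b t c) (Dhat2 L Rk V b t c).
Proof.
  intros Ht Hc.
  generalize (Dhat1_sub_Dhat2 t c Ht Hc).
  assert (Hx : 0 < t * Rk) by nra.
  set (x := t * Rk) in *.
  assert (Hden : 0 < (V * c * (1 + b) + x * (V + c)) * (V + x)).
  { apply Rmult_lt_0_compat; [| lra].
    assert (0 < V * c * (1 + b)) by (apply Rmult_lt_0_compat; nra). nra. }
  assert (Hfac : 0 < L / x * (x + b * V))
    by (apply Rmult_lt_0_compat; [apply Rdiv_lt_0_compat |]; nra).
  assert (HbVc : 0 <= b * V * c) by (apply Rmult_le_pos; nra).
  generalize (sqrt_sqrt _ HbVc) (sqrt_pos (b * V * c)); intros Hsq Hsq0 Hdiff.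
  unfold Dhat; fold x.
  destruct (Rle_dec (sqrt (b * V * c)) x) as [Hle | Hgt].
  - rewrite Rmax_left; [reflexivity |].
    assert (0 <= L / x * (x + b * V) * (x ^ 2 - b * V * c)
                 / ((V * c * (1 + b) + x * (V + c)) * (V + x))).
    { apply Rdiv_le_0_compat; [apply Rmult_le_pos |]; nra. }
    lra.
  - rewrite Rmax_right; [reflexivity |].
    assert (L / x * (x + b * V) * (x ^ 2 - b * V * c)
              / ((V * c * (1 + b) + x * (V + c)) * (V + x)) < 0).
    { apply Rmult_neg_pos; [apply Rmult_pos_neg |]; [lra | nra |].
      apply Rinv_0_lt_compat; exact Hden. }
    lra.
Qed.

Lemma Dhat_convex : convex_pos2 (Dhat L Rk V b).
Proof.
  apply (convex_pos2_ext (fun t c => Rmax (Dhat1 L Rk V b t c) (Dhat2 L Rk V b t c))).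
  - intros t c Ht Hc; symmetry; exact (Dhat_eq_Rmax t c Ht Hc).
  - exact (convex_pos2_Rmax _ _ Dhat1_convex Dhat2_convex).
Qed.

End Delay.

Section RealContinuity.

Context {U : UniformSpace}.
Implicit Types f g : U -> R.

Lemma continuous_Rplus f g x :
  continuous f x -> continuous g x -> continuous (fun y => f y + g y) x.
Proof. exact (continuous_plus f g x). Qed.

Lemma continuous_Rmult f g x :
  continuous f x -> continuous g x -> continuous (fun y => f y * g y) x.
Proof. exact (continuous_mult f g x). Qed.

Lemma continuous_Rdiv f g x :
  continuous f x -> continuous g x -> g x <> 0 -> continuous (fun y => f y / g y) x.
Proof.
  intros Hf Hg Hg0. apply continuous_Rmult; [exact Hf |].
  exact (continuous_comp g Rinv x Hg (continuous_Rinv _ Hg0)).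
Qed.

Lemma continuous_Rmax f g x :
  continuous f x -> continuous g x -> continuous (fun y => Rmax (f y) (g y)) x.
Proof.
  intros Hf Hg.
  apply (continuous_ext (fun y => (f y + g y + Rabs (f y + - g y)) * / 2)).
  { intros y. unfold Rmax, Rabs.
    destruct (Rle_dec (f y) (g y)), (Rcase_abs (f y + - g y)); lra. }
  apply continuous_Rmult; [| apply continuous_const].
  apply continuous_Rplus; [apply continuous_Rplus; assumption |].
  apply (continuous_comp (fun y => f y + - g y) Rabs); [| apply continuous_Rabs].
  exact (continuous_Rplus f (fun y => - g y) x Hf (continuous_opp g x Hg)).
Qed.

End RealContinuity.

Ltac continuous_rational :=
  repeat lazymatch goal with
  | |- continuous (fun _ => Rmax _ _) _ => apply continuous_Rmax
  | |- continuous (fun _ => _ / _) _ => apply continuous_Rdiv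
  | |- continuous (fun _ => _ * _) _ => apply continuous_Rmult
  | |- continuous (fun _ => _ + _) _ => apply continuous_Rplus
  | |- continuous fst (?t, ?c) => exact (continuous_fst t c)
  | |- continuous snd (?t, ?c) => exact (continuous_snd t c)
  | |- continuous (fun _ => _) _ => apply continuous_const
  end.

Lemma Dhat_continuous L Rk V b t c :
  0 < L -> 0 < Rk -> 0 < V -> 0 < b < 1 -> 0 < t -> 0 < c ->
  continuous (fun p : R * R => Dhat L Rk V b (fst p) (snd p)) (t, c).
Proof.
  intros HL HRk HV Hb Ht Hc.
  apply (continuous_ext_loc _
           (fun p : R * R => Rmax (Dhat1 L Rk V b (fst p) (snd p))
                                  (Dhat2 L Rk V b (fst p) (snd p)))).
  - apply (filter_imp (fun p : R * R => 0 < fst p /\ 0 < snd p)).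
    + intros p [Hp1 Hp2]. symmetry.
      exact (Dhat_eq_Rmax L Rk V b HL HRk HV Hb _ _ Hp1 Hp2).
    + apply filter_and.
      * exact (continuous_fst t c _ (open_gt 0 t Ht)).
      * exact (continuous_snd t c _ (open_gt 0 c Hc)).
  - unfold Dhat1, Dhat2; continuous_rational; simpl.
    all: apply Rgt_not_eq.
    all: assert (0 < t * Rk) by nra.
    all: assert (0 < V * c * (1 + b)) by (apply Rmult_lt_0_compat; nra).
    all: nra.
Qed.

Lemma sum_f_R0_convex_comb (a u v : nat -> R) l n :
  (forall k, (k <= n)%nat -> a k <= l * u k + (1 - l) * v k) ->
  sum_f_R0 a n <= l * sum_f_R0 u n + (1 - l) * sum_f_R0 v n.
Proof.
  induction n as [| n IHn]; intros Hle; simpl.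
  - exact (Hle 0%nat (Nat.le_refl 0)).
  - generalize (IHn (fun k Hk => Hle k (Nat.le_le_succ_r _ _ Hk)))
               (Hle (S n) (Nat.le_refl _)).
    lra.
Qed.

Lemma objective_convex K beta alpha L Rk Vd :
  (1 <= K)%nat -> 0 < beta < 1 ->
  (forall k, (k < K)%nat -> 0 < alpha k /\ 0 < L k /\ 0 < Vd k /\ 0 < Rk k) ->
  convex_pos_vec K (objective K alpha L Rk Vd beta).
Proof.
  intros HK Hb Hpar t1 v1 t2 v2 l Hpts Hl. unfold objective.
  apply sum_f_R0_convex_comb; intros k Hk.
  assert (HkK : (k < K)%nat) by lia.
  destruct (Hpar k HkK) as (Ha & HL & HV & HRk).
  destruct (Hpts k HkK) as (H1 & H2 & H3 & H4).
  generalize (Dhat_convex (L k) (Rk k) (Vd k) beta HL HRk HV Hb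
                (t1 k) (v1 k) (t2 k) (v2 k) l H1 H2 H3 H4 Hl); intros Hconv.
  apply Rmult_le_compat_l with (r := alpha k) in Hconv; lra.
Qed.

Theorem theorem3 (K : nat) (beta VcTot : R) (alpha L Rk Vd : nat -> R) :
  (1 <= K)%nat ->
  0 < beta < 1 ->
  0 < VcTot ->
  (forall k, (k < K)%nat -> 0 < alpha k /\ 0 < L k /\ 0 < Vd k /\ 0 < Rk k) ->
  sum_f_R0 alpha (K - 1) = 1 ->
  (forall k, (k < K)%nat ->
     (forall t Vc, 0 < t -> 0 < Vc ->
        continuous (fun p : R * R => Dhat (L k) (Rk k) (Vd k) beta (fst p) (snd p))
          (t, Vc))
     /\ convex_pos2 (Dhat1 (L k) (Rk k) (Vd k) beta)
     /\ convex_pos2 (Dhat2 (L k) (Rk k) (Vd k) beta))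
  /\ convex_pos_vec K (objective K alpha L Rk Vd beta).
Proof.
  (* The budgets VcTot and sum alpha = 1 constrain Problem 4 but not its convexity. *)
  intros HK Hb _ Hpar _. split.
  - intros k Hk. destruct (Hpar k Hk) as (_ & HL & HV & HRk).
    split; [| split].
    + intros t c Ht Hc. apply Dhat_continuous; lra.
    + apply Dhat1_convex; lra.
    + apply Dhat2_convex; lra.
  - exact (objective_convex K beta alpha L Rk Vd HK Hb Hpar).
Qed.
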